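(* Let $p\ge 5$ and let $g_{j,k}\in\{1,-1\}$ for $j=1,2$ and $1\le k\le p-4$. Put $\beta_j=\sigma_1^{g_{j,1}}\sigma_2^{g_{j,2}}\cdots\sigma_{p-5}^{g_{j,p-5}}$ for $j=1,2$. Then \[\beta_1\sigma_{p-4}^{g_{1,p-4}}\sigma_{p-3}\sigma_{p-2}\sigma_{p-1}^{-1}\,\beta_2\sigma_{p-4}^{g_{2,p-4}}\sigma_{p-3}\sigma_{p-2}^{-1}\sigma_{p-1}^{-1}\ \sim_M\ \beta_1\beta_2.\]
   Context: $\sigma_1,\sigma_2,\dots$ denote the standard Artin generators of the braid groups. Two braids (possibly with different numbers of strands) are Markov equivalent, written $\sim_M$, if their closures are isotopic links. *)

From Stdlib Require Import Arith ZArith List Relations.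
Import ListNotations.

(* A letter (i, true) is sigma_i, (i, false) is sigma_i^{-1}. *)
Definition letter := (nat * bool)%type.
Definition word := list letter.

Definition sig (i : nat) (e : Z) : letter := (i, Z.ltb 0 e).

Definition valid (n : nat) (w : word) : Prop :=
  Forall (fun l => 1 <= fst l /\ fst l < n) w.

Inductive braid_step (n : nat) : word -> word -> Prop :=
| bs_free : forall u v i b, 1 <= i < n ->
    braid_step n (u ++ [(i, b); (i, negb b)] ++ v) (u ++ v)
| bs_far : forall u v i j b c, i + 2 <= j \/ j + 2 <= i ->
    braid_step n (u ++ [(i, b); (j, c)] ++ v) (u ++ [(j, c); (i, b)] ++ v)
| bs_braid : forall u v i,
    braid_step n (u ++ [(i, true); (S i, true); (i, true)] ++ v)
                 (u ++ [(S i, true); (i, true); (S i, true)] ++ v).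

(* A braid: number of strands together with a word. *)
Definition braid := (nat * word)%type.

Inductive markov_step : braid -> braid -> Prop :=
| ms_braid : forall n w w', valid n w -> valid n w' -> braid_step n w w' ->
    markov_step (n, w) (n, w')
| ms_conj : forall n w i b, valid n w -> 1 <= i < n ->
    markov_step (n, w) (n, [(i, b)] ++ w ++ [(i, negb b)])
| ms_stab : forall n w b, 1 <= n -> valid n w ->
    markov_step (n, w) (S n, w ++ [(n, b)]).

(* Markov equivalence ~_M : equivalence relation generated by Markov moves
   (by Markov's theorem: closures are isotopic links). *)
Definition markov_equiv : braid -> braid -> Prop :=
  clos_refl_sym_trans braid markov_step.

Definition beta (g : nat -> Z) (p : nat) : word :=
  map (fun k => sig k (g k)) (seq 1 (p - 5)).

(* Put n = p - 4, so that beta g1 p and beta g2 p only use sigma_1, ..., sigma_(n-1).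
   The strands n+4, n+3, n+2, n+1 are removed one at a time by destabilisation.  In each
   stage the top generator sigma_m is commuted past every letter far from it, so that it
   only occurs inside sigma_m^e sigma_(m-1)^c sigma_m^-1; the braid relation
   sigma_m^-1 sigma_(m-1)^-1 sigma_m^-1 = sigma_(m-1)^-1 sigma_m^-1 sigma_(m-1)^-1 (first stage)
   or the conjugation identity sigma_m sigma_(m-1)^c sigma_m^-1 = sigma_(m-1)^-1 sigma_m^c sigma_(m-1)
   (applied twice, then once) leaves a single occurrence of sigma_m, which a cyclic rotation
   moves to the end of the word and a Markov destabilisation deletes.  In the last stage
   sigma_n already occurs only once. *)

From Stdlib Require Import ZArith List Lia Relations Bool Setoid Morphisms.
Import ListNotations.

Lemma valid_mono m n w : m <= n -> valid m w -> valid n w.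
Proof. intros Hmn; apply Forall_impl; intros l; lia. Qed.

Lemma braid_step_valid n x y : braid_step n x y -> (valid n x <-> valid n y).
Proof.
  destruct 1; unfold valid; rewrite !Forall_app, ?Forall_cons_iff;
    simpl; intuition (auto; lia).
Qed.

Definition braid_eq (n : nat) : relation word := clos_refl_sym_trans word (braid_step n).

#[local] Instance braid_eq_Equivalence n : Equivalence (braid_eq n).
Proof.
  split; [intros x; apply rst_refl | intros x y; apply rst_sym | intros x y z; apply rst_trans].
Qed.

Lemma braid_eq_valid n x y : braid_eq n x y -> (valid n x <-> valid n y).
Proof.
  induction 1 as [x y Hxy | | | ]; [exact (braid_step_valid n x y Hxy) | tauto ..].
Qed.

Lemma braid_step_context n u v x y :
  braid_step n x y -> braid_step n (u ++ x ++ v) (u ++ y ++ v).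
Proof.
  destruct 1 as [u0 v0 i b Hi | u0 v0 i j b c Hij | u0 v0 i];
    [ pose proof (bs_free n (u ++ u0) (v0 ++ v) i b Hi) as H
    | pose proof (bs_far n (u ++ u0) (v0 ++ v) i j b c Hij) as H
    | pose proof (bs_braid n (u ++ u0) (v0 ++ v) i) as H ];
    rewrite <- !app_assoc in *; exact H.
Qed.

Lemma braid_eq_context n u v x y :
  braid_eq n x y -> braid_eq n (u ++ x ++ v) (u ++ y ++ v).
Proof.
  induction 1 as [x y Hxy | | | ].
  - apply rst_step, braid_step_context, Hxy.
  - reflexivity.
  - symmetry; assumption.
  - etransitivity; eassumption.
Qed.

#[local] Instance app_braid_eq n :
  Proper (braid_eq n ==> braid_eq n ==> braid_eq n) (@app letter).
Proof.
  intros x x' Hx y y' Hy.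
  transitivity (x' ++ y); [exact (braid_eq_context n [] y _ _ Hx) |].
  pose proof (braid_eq_context n x' [] _ _ Hy) as H; rewrite !app_nil_r in H; exact H.
Qed.

#[local] Instance cons_braid_eq n :
  Proper (eq ==> braid_eq n ==> braid_eq n) (@cons letter).
Proof. intros l l' <- w w' Hw; exact (app_braid_eq n [l] [l] (reflexivity _) w w' Hw). Qed.

Lemma braid_cancel n i b v : 1 <= i < n -> braid_eq n ((i, b) :: (i, negb b) :: v) v.
Proof. intros Hi; apply rst_step; exact (bs_free n [] v i b Hi). Qed.

Lemma braid_far n l m v : fst l + 2 <= fst m \/ fst m + 2 <= fst l ->
  braid_eq n (l :: m :: v) (m :: l :: v).
Proof. destruct l, m; intros Hlm; apply rst_step; exact (bs_far n [] v _ _ _ _ Hlm). Qed.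

Lemma braid_rel n i v :
  braid_eq n ((i, true) :: (S i, true) :: (i, true) :: v) ((S i, true) :: (i, true) :: (S i, true) :: v).
Proof. apply rst_step; exact (bs_braid n [] v i). Qed.

Lemma braid_far_word n i b w v : valid i w ->
  braid_eq n ((S i, b) :: w ++ v) (w ++ (S i, b) :: v).
Proof.
  induction 1 as [|m w Hm Hw IH]; [reflexivity |].
  simpl; rewrite braid_far by (simpl; lia); now rewrite IH.
Qed.

Definition letter_inv (l : letter) : letter := (fst l, negb (snd l)).

Definition word_inv (w : word) : word := rev (map letter_inv w).

Lemma word_inv_cons l w : word_inv (l :: w) = word_inv w ++ [letter_inv l].
Proof. reflexivity. Qed.

Lemma braid_eq_word_inv_r n w : valid n w -> braid_eq n (w ++ word_inv w) [].
Proof.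
  induction 1 as [|[i b] w Hi Hw IH]; [reflexivity |].
  rewrite word_inv_cons; simpl; rewrite app_assoc, IH; simpl.
  now apply braid_cancel.
Qed.

Lemma braid_eq_word_inv_l n w : valid n w -> braid_eq n (word_inv w ++ w) [].
Proof.
  induction 1 as [|[i b] w Hi Hw IH]; [reflexivity |].
  rewrite word_inv_cons, <- app_assoc; unfold letter_inv; simpl.
  rewrite <- (negb_involutive b) at 2.
  now rewrite braid_cancel, IH.
Qed.

Lemma braid_eq_word_inv n u v : valid n u -> braid_eq n u v ->
  braid_eq n (word_inv u) (word_inv v).
Proof.
  intros Hu Huv.
  assert (Hv : valid n v) by now apply (braid_eq_valid n u v).
  transitivity (word_inv u ++ v ++ word_inv v).
  { rewrite braid_eq_word_inv_r by assumption; now rewrite app_nil_r. }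
  transitivity (word_inv u ++ u ++ word_inv v).
  { now do 2 f_equiv. }
  now rewrite app_assoc, braid_eq_word_inv_l.
Qed.

Lemma braid_conj_pos n i v : 1 <= i -> S i < n ->
  braid_eq n ((S i, true) :: (i, true) :: (S i, false) :: v)
             ((i, false) :: (S i, true) :: (i, true) :: v).
Proof.
  intros Hi Hn.
  transitivity ((i, false) :: (i, true) :: (S i, true) :: (i, true) :: (S i, false) :: v).
  { symmetry; apply braid_cancel; lia. }
  rewrite braid_rel, braid_cancel by lia; reflexivity.
Qed.

Lemma braid_eq_word_inv_context n u u' v : valid n u -> braid_eq n u u' ->
  braid_eq n (word_inv u ++ v) (word_inv u' ++ v).
Proof. intros Hu Huu'; now rewrite (braid_eq_word_inv n u u'). Qed.

Lemma braid_conj n i c v : 1 <= i -> S i < n ->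
  braid_eq n ((S i, true) :: (i, c) :: (S i, false) :: v)
             ((i, false) :: (S i, c) :: (i, true) :: v).
Proof.
  intros Hi Hn; destruct c; [now apply braid_conj_pos |].
  (* The case [c = false] is the inverse of the case [c = true]. *)
  apply (braid_eq_word_inv_context n [(S i, true); (i, true); (S i, false)]
                                       [(i, false); (S i, true); (i, true)]).
  - repeat constructor; simpl; lia.
  - exact (braid_conj_pos n i [] Hi Hn).
Qed.

Lemma braid_rel_inv n i v : 1 <= i -> S i < n ->
  braid_eq n ((S i, false) :: (i, false) :: (S i, false) :: v)
             ((i, false) :: (S i, false) :: (i, false) :: v).
Proof.
  intros Hi Hn; symmetry.
  apply (braid_eq_word_inv_context n [(i, true); (S i, true); (i, true)]
                                       [(S i, true); (i, true); (S i, true)]).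
  - repeat constructor; simpl; lia.
  - exact (braid_rel n i []).
Qed.

#[local] Instance markov_equiv_Equivalence : Equivalence markov_equiv.
Proof.
  split; [intros x; apply rst_refl | intros x y; apply rst_sym | intros x y z; apply rst_trans].
Qed.

Lemma markov_braid_eq n w w' : valid n w -> braid_eq n w w' -> markov_equiv (n, w) (n, w').
Proof.
  intros Hw Hww'; revert Hw; induction Hww' as [x y Hxy | x | x y Hxy IH | x y z Hxy IH1 _ IH2];
    intros Hx.
  - apply rst_step, ms_braid; [| apply (braid_step_valid n x y) |]; assumption.
  - reflexivity.
  - symmetry; apply IH, (braid_eq_valid n x y Hxy), Hx.
  - transitivity (n, y); [apply IH1 | apply IH2, (braid_eq_valid n x y Hxy)]; exact Hx.
Qed.

Ltac solve_valid :=
  unfold valid in *;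
  repeat match goal with
         | H : Forall _ (_ ++ _) |- _ => apply Forall_app in H as [? ?]
         | H : Forall _ (_ :: _) |- _ => apply Forall_cons_iff in H as [? ?]
         end;
  repeat first
    [ assumption
    | apply Forall_app; split
    | apply Forall_cons; [simpl; lia |]
    | apply Forall_nil
    | eapply valid_mono; [| eassumption]; lia ].

Lemma markov_rotate_letter n w l : valid n (w ++ [l]) ->
  markov_equiv (n, w ++ [l]) (n, l :: w).
Proof.
  destruct l as [i b]; intros Hw.
  assert (Hi : 1 <= i < n) by solve_valid.
  transitivity (n, (i, b) :: w ++ [(i, b); (i, negb b)]).
  { apply rst_step; pose proof (ms_conj n _ i b Hw Hi) as Hconj.
    now rewrite <- app_assoc in Hconj. }
  apply markov_braid_eq; [solve_valid |].
  now rewrite braid_cancel, app_nil_r.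
Qed.

Lemma markov_rotate n u v : valid n (u ++ v) -> markov_equiv (n, u ++ v) (n, v ++ u).
Proof.
  revert u; induction v as [|l v IH] using rev_ind; intros u Huv.
  - now rewrite app_nil_r.
  - rewrite app_assoc in *; rewrite markov_rotate_letter by assumption.
    rewrite <- app_assoc; apply (IH (l :: u)).
    solve_valid.
Qed.

Lemma markov_destab m u v b : 1 <= m -> valid m u -> valid m v ->
  markov_equiv (S m, u ++ (m, b) :: v) (m, u ++ v).
Proof.
  intros Hm Hu Hv.
  transitivity (S m, (v ++ u) ++ [(m, b)]).
  { rewrite <- app_assoc.
    replace (u ++ (m, b) :: v) with ((u ++ [(m, b)]) ++ v) by now rewrite <- app_assoc.
    apply markov_rotate; solve_valid. }
  transitivity (m, v ++ u).
  { symmetry; apply rst_step, ms_stab; solve_valid. }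
  apply markov_rotate; solve_valid.
Qed.

Lemma markov_destab_conj i u v c : 1 <= i -> valid (S i) u -> valid i v ->
  markov_equiv (S (S i), u ++ (S i, true) :: v ++ [(i, c); (S i, false)]) (S i, u ++ v).
Proof.
  intros Hi Hu Hv.
  transitivity (S (S i), (u ++ v ++ [(i, false)]) ++ (S i, c) :: [(i, true)]).
  { apply markov_braid_eq; [solve_valid |].
    rewrite braid_far_word, braid_conj by (auto; lia).
    now rewrite <- !app_assoc. }
  rewrite markov_destab by (auto; solve_valid).
  apply markov_braid_eq; [solve_valid |].
  rewrite <- !app_assoc; simpl.
  now rewrite braid_cancel, app_nil_r by lia.
Qed.

Lemma markov_destab_conj_conj i u v : 1 <= i -> valid (S i) u -> valid i v ->
  markov_equiv (S (S i), u ++ (S i, true) :: v ++ [(i, true); (S i, false); (S i, false)])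
               (S i, u ++ v ++ [(i, false)]).
Proof.
  intros Hi Hu Hv.
  transitivity (S (S i), (u ++ v ++ [(i, false)]) ++ (S i, true) :: [] ++ [(i, true); (S i, false)]).
  { apply markov_braid_eq; [solve_valid |].
    rewrite braid_far_word, braid_conj by (auto; lia).
    now rewrite <- !app_assoc. }
  rewrite markov_destab_conj by (auto; solve_valid).
  now rewrite app_nil_r.
Qed.

Lemma markov_destab_rel_inv i u v : 1 <= i -> valid (S i) u -> valid i v ->
  markov_equiv (S (S i), u ++ (S i, false) :: v ++ [(i, false); (S i, false)])
               (S i, u ++ v ++ [(i, false); (i, false)]).
Proof.
  intros Hi Hu Hv.
  transitivity (S (S i), (u ++ v ++ [(i, false)]) ++ (S i, false) :: [(i, false)]).
  { apply markov_braid_eq; [solve_valid |].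
    rewrite braid_far_word, braid_rel_inv by (auto; lia).
    now rewrite <- !app_assoc. }
  rewrite markov_destab by (auto; solve_valid).
  now rewrite <- !app_assoc.
Qed.

Lemma markov_destab_four n X Z a b : 1 <= n -> valid n X -> valid n Z ->
  markov_equiv
    (S (S (S (S n))), X ++ [(n, a); (S n, true); (S (S n), true); (S (S (S n)), false)]
                        ++ Z ++ [(n, b); (S n, true); (S (S n), false); (S (S (S n)), false)])
    (n, X ++ Z).
Proof.
  intros Hn HX HZ.
  pose proof (markov_destab_rel_inv (S (S n)) (X ++ [(n, a); (S n, true); (S (S n), true)])
                (Z ++ [(n, b); (S n, true)]) ltac:(lia) ltac:(solve_valid) ltac:(solve_valid)) as Hrel_inv.
  pose proof (markov_destab_conj_conj (S n) (X ++ [(n, a); (S n, true)]) (Z ++ [(n, b)])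
                ltac:(lia) ltac:(solve_valid) ltac:(solve_valid)) as Hconj_conj.
  pose proof (markov_destab_conj n (X ++ [(n, a)]) Z b Hn ltac:(solve_valid) HZ) as Hconj.
  pose proof (markov_destab n X Z a Hn HX HZ) as Hdestab.
  rewrite <- !app_assoc in *; simpl in *.
  now rewrite Hrel_inv, Hconj_conj, Hconj, Hdestab.
Qed.

Lemma beta_valid g p : valid (p - 4) (beta g p).
Proof.
  apply Forall_forall; intros l Hl.
  apply in_map_iff in Hl as [k [<- Hk]]; apply in_seq in Hk; simpl; lia.
Qed.

Theorem lemma3p3 (p : nat) (g1 g2 : nat -> Z) :
  5 <= p ->
  (forall k, 1 <= k <= p - 4 -> g1 k = 1%Z \/ g1 k = (-1)%Z) ->
  (forall k, 1 <= k <= p - 4 -> g2 k = 1%Z \/ g2 k = (-1)%Z) ->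
  markov_equiv
    (p, beta g1 p ++ [sig (p - 4) (g1 (p - 4)); sig (p - 3) 1; sig (p - 2) 1; sig (p - 1) (-1)]
        ++ beta g2 p ++ [sig (p - 4) (g2 (p - 4)); sig (p - 3) 1; sig (p - 2) (-1); sig (p - 1) (-1)])
    (p - 4, beta g1 p ++ beta g2 p).
Proof.
  (* The exponents need not be +-1: [sig] only reads their sign. *)
  intros Hp _ _.
  replace (p - 3) with (S (p - 4)) by lia.
  replace (p - 2) with (S (S (p - 4))) by lia.
  replace (p - 1) with (S (S (S (p - 4)))) by lia.
  replace p with (S (S (S (S (p - 4))))) at 1 by lia.
  apply markov_destab_four; [lia | apply beta_valid ..].
Qed.
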